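(* For every space $\mathcal{BL}_F(\{\mathcal{F}_1,\dots,\mathcal{F}_{B_{\mathcal{G}}}\})$ of jointly bandlimited FTVGS with joint bandwidth $B$, there exists a stable sampling set $\mathcal{S}\subseteq\mathcal{V}_{\mathcal{G}}\times\mathcal{V}_{\mathcal{T}}$ (allowing perfect reconstruction of every $\mathbf{X}$ in the space from $\{\mathbf{X}(v,n):(v,n)\in\mathcal{S}\}$) with $|\mathcal{S}|=B$, i.e. total sampling ratio $R_F(\mathcal{S})=B/(NT)$, and with vertex projection $\mathcal{S}_{\mathcal{G}}=\{v:(v,n)\in\mathcal{S}\}$ satisfying $|\mathcal{S}_{\mathcal{G}}|\le B_{\mathcal{G}}$. Hence critical sampling of jointly bandlimited FTVGS is achievable.
   Context: $\mathcal{G}$ undirected graph with $N$ vertices and orthonormal Laplacian eigenvector matrix $\mathbf{U}_{\mathcal{G}}$; $\mathcal{V}_{\mathcal{T}}=\{1,\dots,T\}$ with $\mathbf{U}_{\mathcal{T}}$ the $T\times T$ unitary normalized DFT matrix $\mathbf{U}_{\mathcal{T}}^H(n,m)=T^{-1/2}e^{-j2\pi(m-1)n/T}$. FTVGS $\mathbf{X}\in\mathbb{C}^{N\times T}$; JFT $\mathcal{F}_{\mathcal{J}}(\mathbf{X})=\mathbf{U}_{\mathcal{G}}^H\mathbf{X}\overline{\mathbf{U}}_{\mathcal{T}}$. $\mathcal{F}_i\subseteq\{1,\dots,T\}$ is the allowed support of row $i$ of the JFT; $\mathcal{I}=\{i:\mathcal{F}_i\ne\emptyset\}$, $B_{\mathcal{G}}=|\mathcal{I}|$,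 joint bandwidth $B=\sum_i|\mathcal{F}_i|<NT$. $\mathcal{BL}_F(\{\mathcal{F}_1,\dots,\mathcal{F}_{B_{\mathcal{G}}}\})=\{\mathbf{X}:\mathcal{F}_{\mathcal{J}}(\mathbf{X})(i,f)=0\ \forall f\notin\mathcal{F}_i\}$. Stability of $\mathcal{S}$: $A\|\mathbf{X}\|^2\le\sum_{(v,n)\in\mathcal{S}}|\mathbf{X}(v,n)|^2\le A'\|\mathbf{X}\|^2$ for some $0<A\le A'<\infty$ and all $\mathbf{X}$ in the space. $R_F(\mathcal{S})=|\mathcal{S}|/(NT)$. *)

From mathcomp Require Import all_boot all_algebra.
From mathcomp Require Import reals trigo.
From mathcomp Require Export complex.
Set Implicit Arguments.
Unset Strict Implicit.
Unset Printing Implicit Defensive.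
Import GRing.Theory Num.Theory.
Local Open Scope ring_scope.
Local Open Scope complex_scope.

Section FTVGS.
Variable R : realType.

Definition conjmx m n (A : 'M[R[i]]_(m, n)) : 'M[R[i]]_(m, n) := map_mx conjc A.
Definition adjmx m n (A : 'M[R[i]]_(m, n)) : 'M[R[i]]_(n, m) := (conjmx A)^T.
Definition unitarymx n (U : 'M[R[i]]_n) : Prop := adjmx U *m U = 1%:M.

Definition cplxmx m n (A : 'M[R]_(m, n)) : 'M[R[i]]_(m, n) := map_mx (real_complex R) A.

Definition laplacian N (W : 'M[R]_N) : 'M[R]_N :=
  diag_mx (\row_(i < N) \sum_(j < N) W i j) - W.

Definition undirected_graph N (W : 'M[R]_N) : Prop :=
  W^T = W /\ (forall i j, 0 <= W i j).

Definition laplacian_eigenbasis N (W : 'M[R]_N) (UG : 'M[R[i]]_N) : Prop :=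
  unitarymx UG /\
  exists lam : 'rV[R]_N, cplxmx (laplacian W) *m UG = UG *m diag_mx (cplxmx lam).

Definition dft_root (T : nat) : R[i] :=
  cos (2 * pi / T%:R) +i* sin (2 * pi / T%:R).

(* unitary normalized DFT matrix (0-based indices):
   U_T(m,n) = T^{-1/2} e^{j 2 pi m n / T}, so U_T^H(n,m) = T^{-1/2} e^{-j 2 pi m n / T} *)
Definition UT (T : nat) : 'M[R[i]]_T :=
  \matrix_(m < T, n < T) (((Num.sqrt (T%:R : R))^-1)%:C * dft_root T ^+ (m * n)%N).

Definition JFT N T (UG : 'M[R[i]]_N) (X : 'M[R[i]]_(N, T)) : 'M[R[i]]_(N, T) :=
  adjmx UG *m X *m conjmx (UT T).

Definition in_BL N T (UG : 'M[R[i]]_N) (F : 'I_N -> {set 'I_T})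
  (X : 'M[R[i]]_(N, T)) : Prop :=
  forall (i : 'I_N) (f : 'I_T), f \notin F i -> JFT UG X i f = 0.

Definition joint_bw N T (F : 'I_N -> {set 'I_T}) : nat := (\sum_(i < N) #|F i|)%N.
Definition graph_bw N T (F : 'I_N -> {set 'I_T}) : nat := #|[set i | F i != set0]|.

Definition sqnorm N T (X : 'M[R[i]]_(N, T)) : R[i] :=
  \sum_(v < N) \sum_(n < T) `|X v n| ^+ 2.
Definition sample_energy N T (S : {set 'I_N * 'I_T}) (X : 'M[R[i]]_(N, T)) : R[i] :=
  \sum_(p in S) `|X p.1 p.2| ^+ 2.

Definition stable_sampling N T (UG : 'M[R[i]]_N) (F : 'I_N -> {set 'I_T})
  (S : {set 'I_N * 'I_T}) : Prop :=
  exists A A' : R, 0 < A /\ A <= A' /\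
    forall X, in_BL UG F X ->
      (A%:C * sqnorm X <= sample_energy S X) /\ (sample_energy S X <= A'%:C * sqnorm X).

Definition vertex_proj N T (S : {set 'I_N * 'I_T}) : {set 'I_N} := [set p.1 | p in S].

Definition sampling_ratio N T (S : {set 'I_N * 'I_T}) : R := #|S|%:R / (N * T)%:R.

End FTVGS.

(* A signal of the bandlimited space is X = U_G D U_T with D supported on
   {(i, f) | f \in F_i}, a space of dimension B parametrised by the JFT coefficients.
   The columns of U_G indexed by the nonempty rows of the support are independent, so
   some B_G vertices give an invertible square block of them; sampling these vertices at
   all times then determines D. Among these B_G T sample functionals one extracts B
   independent ones: the resulting B x B sampling matrix is invertible, which gives
   perfect reconstruction and, through its inverse, the lower stability bound. *)

From Pilot Require Import Defs.
From mathcomp Require Import all_boot all_order all_algebra.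
From mathcomp Require Import reals trigo complex.
From mathcomp Require Import ring lra.
Set Implicit Arguments.
Unset Strict Implicit.
Unset Printing Implicit Defensive.

Import Order.TTheory GRing.Theory Num.Theory.
Local Open Scope ring_scope.
Local Open Scope complex_scope.

Section DFT.
Variable R : realType.
Local Notation C := R[i].

Lemma cisD (a b : R) :
  (cos a +i* sin a) * (cos b +i* sin b) = cos (a + b) +i* sin (a + b).
Proof. by rewrite cosD sinD; simpc; congr (_ +i* _); rewrite addrC [sin a * _]mulrC. Qed.

Lemma cisMn (a : R) j : (cos a +i* sin a) ^+ j = cos (a * j%:R) +i* sin (a * j%:R).
Proof.
elim: j => [|j IH]; first by rewrite expr0 mulr0 cos0 sin0.
by rewrite exprS IH cisD -[j.+1]addn1 natrD mulrDr mulr1 addrC.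
Qed.

Lemma cis_neq1 (x : R) : 0 < x -> x < pi *+ 2 -> cos x +i* sin x != 1.
Proof.
move=> x_gt0 x_lt2pi; apply/negP => /eqP [cos1 sin0].
have [x_ltpi|] := ltP x pi.
  by have := @sin_gt0_pi _ x; rewrite x_gt0 x_ltpi sin0 ltxx => /(_ isT).
rewrite le_eqVlt => /orP[/eqP pi_x|pi_ltx].
  by move: cos1; rewrite -pi_x cospi; lra.
have : 0 < x - pi < pi by rewrite subr_gt0 pi_ltx /= ltrBlDr -mulr2n.
by move/sin_gt0_pi; rewrite -(opprK (sin _)) -sinDpi subrK sin0 oppr0 ltxx.
Qed.

Lemma dft_rootX T j : dft_root R T ^+ j =
  cos (2 * pi / T%:R * j%:R) +i* sin (2 * pi / T%:R * j%:R).
Proof. exact: cisMn. Qed.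

Lemma dft_root_unity T : (0 < T)%N -> dft_root R T ^+ T = 1.
Proof.
move=> T_gt0; rewrite dft_rootX mulfVK ?pnatr_eq0 -?lt0n //.
by rewrite mulr_natl cos2pi sin2pi.
Qed.

Lemma dft_root_primitive T j : (0 < j < T)%N -> dft_root R T ^+ j != 1.
Proof.
case/andP=> j_gt0 j_ltT; have T_gt0 : (0 < T)%N by apply: leq_trans j_ltT.
rewrite dft_rootX; apply: cis_neq1.
  by rewrite mulr_gt0 ?divr_gt0 ?mulr_gt0 ?pi_gt0 ?ltr0n.
rewrite mulrAC ltr_pdivrMr ?ltr0n // -mulr_natl mulr1.
have : (j%:R < T%:R :> R) by rewrite ltr_nat.
have := pi_gt0 R; nra.
Qed.

Lemma dft_root_mulconj T : dft_root R T * (dft_root R T)^* = 1.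
Proof. by rewrite /dft_root; simpc; rewrite -!expr2 cos2Dsin2 mulrC addNr. Qed.

Lemma sum_expr_root_unity_eq0 (z : C) T :
  z ^+ T = 1 -> z != 1 -> \sum_(i < T) z ^+ i = 0.
Proof.
move=> zT z_neq1; have : (z - 1) * \sum_(i < T) z ^+ i = 0.
  by rewrite -subrX1 zT subrr.
by move/eqP; rewrite mulf_eq0 subr_eq0 (negbTE z_neq1) => /eqP.
Qed.

Lemma dft_root_ratio_neq1 T (p q : 'I_T) :
  p != q -> dft_root R T ^+ p * (dft_root R T)^* ^+ q != 1.
Proof.
set w := dft_root R T; have wwc : w * w^* = 1 by apply: dft_root_mulconj.
have ltT (i : 'I_T) j : (i - j < T)%N by apply: leq_ltn_trans (leq_subr _ _) _.
case: (ltngtP p q) => [p_lt_q|q_lt_p|/val_inj->]; last by rewrite eqxx.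
- rewrite -(subnKC (ltnW p_lt_q)) exprD mulrA -exprMn wwc expr1n mul1r => _.
  apply: contraNneq (@dft_root_primitive T (q - p) _) => [wc1|].
    by rewrite -[dft_root R T]conjcK -rmorphXn wc1 rmorph1.
  by rewrite subn_gt0 p_lt_q ltT.
- rewrite -(subnKC (ltnW q_lt_p)) exprD mulrAC -exprMn wwc expr1n mul1r => _.
  by apply: dft_root_primitive; rewrite subn_gt0 q_lt_p ltT.
Qed.

Lemma conjUT_entry T i j : Defs.conjmx (UT R T) i j =
  ((Num.sqrt (T%:R : R))^-1)%:C * (dft_root R T)^* ^+ (i * j).
Proof. by rewrite !mxE rmorphM rmorphXn; congr (_ * _); apply: conjc_real. Qed.

Lemma UT_mulconj T : UT R T *m Defs.conjmx (UT R T) = 1%:M.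
Proof.
case: T => [|T]; first by apply/matrixP => [[]].
set w := dft_root R T.+1; set c : C := ((Num.sqrt (T.+1%:R : R))^-1)%:C.
have c2 : c * c = T.+1%:R^-1.
  rewrite -rmorphM /= -expr2 exprVn sqr_sqrtr ?ler0n //.
  by rewrite rmorphV ?unitfE ?pnatr_eq0 //= rmorph_nat.
apply/matrixP => p q; rewrite !mxE.
under eq_bigr => k _ do rewrite conjUT_entry mxE -/w -/c
  mulrACA c2 [(k * q)%N]mulnC !exprM -exprMn.
rewrite -mulr_sumr; have [->|p_neq_q] := eqVneq p q.
  under eq_bigr => k _ do rewrite -exprMn dft_root_mulconj !expr1n.
  by rewrite sumr_const card_ord mulVf ?pnatr_eq0 // eqxx.
rewrite sum_expr_root_unity_eq0 ?mulr0 ?dft_root_ratio_neq1 //.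
rewrite exprMn -!exprM mulnC exprM dft_root_unity // expr1n mul1r.
by rewrite mulnC exprM -rmorphXn dft_root_unity // rmorph1 expr1n.
Qed.

Lemma conjUT_mul T : Defs.conjmx (UT R T) *m UT R T = 1%:M.
Proof. exact/mulmx1C/UT_mulconj. Qed.

End DFT.

Lemma inj_mulmx_rowsub_unit (K : fieldType) m n (A : 'M[K]_(m, n)) :
  (forall z : 'cV_n, A *m z = 0 -> z = 0) ->
  exists f : 'I_n -> 'I_m, injective f /\ rowsub f A \in unitmx.
Proof.
move=> A_inj; have A_full : row_full A.
  rewrite /row_full -mxrank_tr; apply: inj_row_free => v vA0.
  apply: trmx_inj; rewrite trmx0; apply: A_inj.
  by rewrite -[A]trmxK -trmx_mul vA0 trmx0.
exists (fullrankfun A_full); split; first exact: fullrankfun_inj.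
exact: fullrowsub_unit.
Qed.

Section Stability.
Variable R : realType.
Local Notation C := R[i].

Lemma norm_le_sqrt_sumsq (I : finType) (s : I -> C) b :
  `|s b| <= sqrtC (\sum_a `|s a| ^+ 2).
Proof.
rewrite -(sqrCK (normr_ge0 (s b))) ler_sqrtC ?qualifE /= ?exprn_ge0 //.
  by rewrite (bigD1 b) //= lerDl sumr_ge0 // => a _; rewrite exprn_ge0.
by rewrite sumr_ge0 // => a _; rewrite exprn_ge0.
Qed.

Lemma norm_lincomb_le (I : finType) (s l : I -> C) :
  `|\sum_b s b * l b| <= (\sum_b `|l b|) * sqrtC (\sum_b `|s b| ^+ 2).
Proof.
rewrite mulr_suml; apply: le_trans (ler_norm_sum _ _ _) _; apply: ler_sum => b _.
by rewrite normrM mulrC ler_wpM2l ?norm_le_sqrt_sumsq.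
Qed.

Lemma sqnorm_le_lincomb (I : finType) N T (X : 'M[C]_(N, T)) (s : I -> C)
    (L : I -> 'M[C]_(N, T)) :
  (forall v n, X v n = \sum_b s b * L b v n) ->
  sqnorm X <= (\sum_v \sum_n (\sum_b `|L b v n|) ^+ 2) * \sum_b `|s b| ^+ 2.
Proof.
move=> XE; rewrite /sqnorm mulr_suml; apply: ler_sum => v _.
rewrite mulr_suml; apply: ler_sum => n _.
rewrite -[X in _ <= _ * X]sqrtCK -exprMn XE.
apply: lerXn2r; last exact: norm_lincomb_le; rewrite qualifE /= ?normr_ge0 //.
by rewrite mulr_ge0 ?sqrtC_ge0 ?sumr_ge0 // => *; rewrite exprn_ge0.
Qed.

Lemma ge0_le_real_ge1 (c : C) : 0 <= c -> exists K : R, 1 <= K /\ c <= K%:C.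
Proof.
move=> c_ge0; exists (Num.sqrt (complex.Re c ^+ 2 + complex.Im c ^+ 2) + 1).
by rewrite lerDr ?sqrtr_ge0 // rmorphD /= -normc_def ger0_norm // lerDl ler01.
Qed.

Section FiniteSampling.
Variables (m N T : nat) (E : 'I_m -> 'M[C]_(N, T)).

Definition lincomb_mx (y : 'I_m -> C) : 'M[C]_(N, T) := \sum_a y a *: E a.
Definition sample_mx r (Q : 'I_r -> 'I_N * 'I_T) : 'M[C]_(r, m) :=
  \matrix_(c, a) E a (Q c).1 (Q c).2.

Lemma lincomb_mxE y v n : lincomb_mx y v n = \sum_a y a * E a v n.
Proof. by rewrite summxE; apply: eq_bigr => a _; rewrite mxE. Qed.

Lemma sample_mx_mul r (Q : 'I_r -> 'I_N * 'I_T) y :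
  sample_mx Q *m \col_a y a = \col_c lincomb_mx y (Q c).1 (Q c).2.
Proof.
apply/matrixP => c j; rewrite !mxE lincomb_mxE.
by apply: eq_bigr => a _; rewrite !mxE mulrC.
Qed.

Lemma rowsub_sample_mx r r' (Q : 'I_r -> 'I_N * 'I_T) (g : 'I_r' -> 'I_r) :
  rowsub g (sample_mx Q) = sample_mx (Q \o g).
Proof. by apply/matrixP => c a; rewrite !mxE. Qed.

Variable P : 'I_m -> 'I_N * 'I_T.
Hypothesis sample_mx_unit : sample_mx P \in unitmx.

Lemma lincomb_mx_from_samples y v n :
  lincomb_mx y v n =
  \sum_b lincomb_mx y (P b).1 (P b).2 * \sum_a invmx (sample_mx P) a b * E a v n.
Proof.
have coefs a : y a = \sum_b invmx (sample_mx P) a b * lincomb_mx y (P b).1 (P b).2.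
  have := congr1 (fun M => (invmx (sample_mx P) *m M) a 0) (sample_mx_mul P y).
  by rewrite /= mulKmx // !mxE => ->; apply: eq_bigr => b _; rewrite mxE.
rewrite lincomb_mxE; under eq_bigr => a _ do rewrite coefs mulr_suml.
rewrite exchange_big /=; apply: eq_bigr => b _.
by rewrite mulr_sumr; apply: eq_bigr => a _; ring.
Qed.

Lemma sqnorm_le_samples : exists K : R, 1 <= K /\ forall y,
  sqnorm (lincomb_mx y) <= K%:C * \sum_a `|lincomb_mx y (P a).1 (P a).2| ^+ 2.
Proof.
pose L b : 'M[C]_(N, T) := \matrix_(v, n) \sum_a invmx (sample_mx P) a b * E a v n.
have [|K [K_ge1 LK]] := @ge0_le_real_ge1 (\sum_v \sum_n (\sum_b `|L b v n|) ^+ 2).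
  by do 2!(apply: sumr_ge0 => ? _); rewrite exprn_ge0 ?sumr_ge0.
exists K; split => // y.
have y_samples v n : lincomb_mx y v n =
    \sum_b lincomb_mx y (P b).1 (P b).2 * L b v n.
  by rewrite lincomb_mx_from_samples; apply: eq_bigr => b _; rewrite mxE.
apply: le_trans (sqnorm_le_lincomb y_samples) _.
by rewrite ler_wpM2r // sumr_ge0 // => a _; rewrite exprn_ge0.
Qed.

End FiniteSampling.

Lemma sample_energy_le_sqnorm N T (S : {set 'I_N * 'I_T}) (X : 'M[C]_(N, T)) :
  sample_energy S X <= sqnorm X.
Proof.
rewrite /sample_energy /sqnorm pair_bigA /= [X in _ <= X](bigID (mem S)) /= lerDl.
by rewrite sumr_ge0 // => p _; rewrite exprn_ge0.
Qed.

Lemma sample_energy_imset m N T (P : 'I_m -> 'I_N * 'I_T) (X : 'M[C]_(N, T)) :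
  injective P ->
  sample_energy (P @: setT) X = \sum_a `|X (P a).1 (P a).2| ^+ 2.
Proof.
move=> P_inj; rewrite /sample_energy big_imset /=; last by move=> ? ? _ _; apply: P_inj.
by apply: eq_bigl => a; rewrite in_setT.
Qed.

Lemma stable_sampling_lower_bound N T (UG : 'M[C]_N) (F : 'I_N -> {set 'I_T})
    (S : {set 'I_N * 'I_T}) (K : R) :
  1 <= K -> (forall X, in_BL UG F X -> sqnorm X <= K%:C * sample_energy S X) ->
  stable_sampling UG F S.
Proof.
move=> K_ge1 lower; have K_gt0 : 0 < K by apply: lt_le_trans K_ge1.
exists K^-1, 1; split; first by rewrite invr_gt0.
split; first by rewrite invr_le1 ?unitfE ?gt_eqF.
move=> X X_BL; rewrite rmorph1 mul1r sample_energy_le_sqnorm; split => //.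
have Ki_ge0 : 0 <= K^-1%:C by rewrite lecR invr_ge0 ltW.
by have := ler_wpM2l Ki_ge0 (lower X X_BL); rewrite mulrA -rmorphM mulVf ?gt_eqF ?mul1r.
Qed.

End Stability.

Section Bandlimited.
Variables (R : realType) (N T : nat) (F : 'I_N -> {set 'I_T}).
Local Notation C := R[i].

Definition band_support : {set 'I_N * 'I_T} := [set p | p.2 \in F p.1].

Lemma card_band_support : #|band_support| = joint_bw F.
Proof.
rewrite /joint_bw -sum1_card big_mkcond /=.
rewrite (eq_bigr (fun p => if (p.1, p.2) \in band_support then 1 else 0)%N); last by case.
rewrite -(pair_bigA _ (fun i f => if (i, f) \in band_support then 1 else 0)%N) /=.
apply: eq_bigr => i _; rewrite -sum1_card [RHS]big_mkcond /=.
by apply: eq_bigr => f _; rewrite inE.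
Qed.

Definition band_rows : {set 'I_N} := [set i | F i != set0].

Lemma band_support_row p : p \in band_support -> p.1 \in band_rows.
Proof. by rewrite !inE => p2F; apply/set0Pn; exists p.2. Qed.

Local Notation B := #|band_support|.
Local Notation k := #|band_rows|.

Definition band_index (a : 'I_B) : 'I_N * 'I_T := enum_val a.
Definition row_index (c : 'I_k) : 'I_N := enum_val c.

Definition band_coef_mx (y : 'I_B -> C) : 'M[C]_(N, T) :=
  \sum_a y a *: delta_mx (band_index a).1 (band_index a).2.

Lemma band_coef_mxE y i f :
  band_coef_mx y i f = \sum_a y a * (band_index a == (i, f))%:R.
Proof.
rewrite summxE; apply: eq_bigr => a _; rewrite !mxE; congr (_ * _%:R).
by case: (band_index a) => i' f' /=; rewrite xpair_eqE [i' == i]eq_sym [f' == f]eq_sym.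
Qed.

Lemma band_coef_mx_index y a :
  band_coef_mx y (band_index a).1 (band_index a).2 = y a.
Proof.
rewrite band_coef_mxE -surjective_pairing (bigD1 a) //= eqxx mulr1 big1 ?addr0 //.
by move=> b b_neq_a; rewrite (inj_eq enum_val_inj) (negbTE b_neq_a) mulr0.
Qed.

Lemma band_coef_mx_out y i f : (i, f) \notin band_support -> band_coef_mx y i f = 0.
Proof.
move=> if_out; rewrite band_coef_mxE big1 // => a _.
case: eqP => [a_if|]; last by rewrite mulr0.
by move: (enum_valP a); rewrite -/(band_index a) a_if (negbTE if_out).
Qed.

Variable UG : 'M[C]_N.
Hypothesis UG_unitary : Defs.unitarymx UG.

Definition band_basis (a : 'I_B) : 'M[C]_(N, T) :=
  UG *m delta_mx (band_index a).1 (band_index a).2 *m UT R T.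

Lemma lincomb_band_basis y : lincomb_mx band_basis y = UG *m band_coef_mx y *m UT R T.
Proof.
rewrite mulmx_sumr mulmx_suml; apply: eq_bigr => a _.
by rewrite /band_basis scalemxAl scalemxAr.
Qed.

Lemma in_BL_lincomb X : in_BL UG F X ->
  X = lincomb_mx band_basis (fun a => JFT UG X (band_index a).1 (band_index a).2).
Proof.
move=> X_BL; rewrite lincomb_band_basis.
have -> : band_coef_mx (fun a => JFT UG X (band_index a).1 (band_index a).2) = JFT UG X.
  apply/matrixP => i f; have [if_in|if_out] := boolP ((i, f) \in band_support).
    by have := band_coef_mx_index (fun a => JFT UG X (band_index a).1 (band_index a).2)
      (enum_rank_in if_in (i, f)); rewrite /band_index enum_rankK_in.
  by rewrite band_coef_mx_out // X_BL //; move: if_out; rewrite inE.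
by rewrite /JFT !mulmxA (mulmx1C UG_unitary) mul1mx -mulmxA conjUT_mul mulmx1.
Qed.

Definition band_eigvecs : 'M[C]_(N, k) := \matrix_(v, c) UG v (row_index c).

Lemma band_eigvecs_inj (z : 'cV_k) : band_eigvecs *m z = 0 -> z = 0.
Proof.
move=> Gz; pose z' : 'cV[C]_N := \col_i \sum_c z c 0 * (row_index c == i)%:R.
have UGz' : UG *m z' = 0.
  rewrite -Gz; apply/matrixP => v j; rewrite (ord1 j) !mxE.
  under eq_bigr => i _ do rewrite mxE mulr_sumr.
  rewrite exchange_big /=; apply: eq_bigr => c _; rewrite mxE.
  rewrite (bigD1 (row_index c)) //= eqxx mulr1 big1 ?addr0 ?(mulrC (z c 0)) //.
  by move=> i /negbTE i_neq; rewrite eq_sym i_neq !mulr0.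
have z'0 : z' = 0 by rewrite -[z']mul1mx -UG_unitary -mulmxA UGz' mulmx0.
apply/matrixP => c j; rewrite (ord1 j) mxE.
have := congr1 (fun M : 'cV[C]_N => M (row_index c) 0) z'0; rewrite !mxE.
rewrite (bigD1 c) //= eqxx mulr1 big1 ?addr0 // => c' c'_neq.
by rewrite (inj_eq enum_val_inj) (negbTE c'_neq) mulr0.
Qed.

Section SampledVertices.
Variable fv : 'I_k -> 'I_N.
Hypothesis band_eigvecs_sub_unit : rowsub fv band_eigvecs \in unitmx.

Lemma rowsub_mul_UG_eq0 (D : 'M[C]_(N, T)) :
  (forall i f, i \notin band_rows -> D i f = 0) ->
  rowsub fv (UG *m D) = 0 -> D = 0.
Proof.
move=> D_out UGD0; pose DI : 'M[C]_(k, T) := \matrix_(c, f) D (row_index c) f.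
have UGD : rowsub fv (UG *m D) = rowsub fv band_eigvecs *m DI.
  apply/matrixP => b f; rewrite !mxE (bigID (mem band_rows)) /=.
  rewrite [X in _ + X]big1 ?addr0 => [|i /D_out ->]; last by rewrite mulr0.
  by rewrite big_enum_val; apply: eq_bigr => c _; rewrite !mxE.
have DI0 : DI = 0.
  by rewrite -[DI]mul1mx -(mulVmx band_eigvecs_sub_unit) -mulmxA -UGD UGD0 mulmx0.
apply/matrixP => i f; rewrite mxE; have [i_in|/D_out //] := boolP (i \in band_rows).
move/matrixP/(_ (enum_rank_in i_in i) f): DI0.
by rewrite !mxE /row_index enum_rankK_in.
Qed.

Lemma lincomb_band_basis_eq0 y :
  (forall b f, lincomb_mx band_basis y (fv b) f = 0) -> forall a, y a = 0.
Proof.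
move=> samples0 a; rewrite -band_coef_mx_index.
suff -> : band_coef_mx y = 0 by rewrite mxE.
apply: rowsub_mul_UG_eq0 => [i f i_out|].
  by rewrite band_coef_mx_out //; apply: contra i_out; apply: band_support_row.
have := congr1 (fun X => rowsub fv X *m Defs.conjmx (UT R T)) (lincomb_band_basis y).
rewrite /= -!mul_rowsub_mx -mulmxA UT_mulconj mulmx1 => <-.
by apply/matrixP => b f; rewrite !mxE big1 // => n _; rewrite mxE samples0 mul0r.
Qed.

Definition vertex_time_samples (c : 'I_#|{: 'I_k * 'I_T}|) : 'I_N * 'I_T :=
  (fv (enum_val c).1, (enum_val c).2).

Lemma sample_mx_vertex_time_inj (z : 'cV_B) :
  sample_mx band_basis vertex_time_samples *m z = 0 -> z = 0.
Proof.
rewrite [z](_ : _ = \col_a z a 0); last by apply/matrixP => a j; rewrite (ord1 j) mxE.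
rewrite sample_mx_mul => samples0; apply/matrixP => a j; rewrite !mxE.
apply: (lincomb_band_basis_eq0 (y := fun a => z a 0)) => b f.
move/matrixP/(_ (enum_rank (b, f)) 0): samples0.
by rewrite !mxE /vertex_time_samples enum_rankK.
Qed.

Lemma vertex_time_samples_inj : injective fv -> injective vertex_time_samples.
Proof.
move=> fv_inj c c' [/fv_inj eq1 eq2]; apply: enum_val_inj.
by move: eq1 eq2; case: (enum_val c) => ? ?; case: (enum_val c') => ? ? /= -> ->.
Qed.

End SampledVertices.

Lemma exists_critical_samples : exists P : 'I_B -> 'I_N * 'I_T,
  [/\ injective P, sample_mx band_basis P \in unitmx
    & (#|vertex_proj (P @: setT)| <= graph_bw F)%N].
Proof.
have [fv [fv_inj fv_unit]] := inj_mulmx_rowsub_unit band_eigvecs_inj.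
have [g [g_inj g_unit]] := inj_mulmx_rowsub_unit (sample_mx_vertex_time_inj fv_unit).
exists (vertex_time_samples fv \o g); split.
- exact/inj_comp/g_inj/vertex_time_samples_inj.
- by rewrite -rowsub_sample_mx.
apply: leq_trans (subset_leq_card (_ : _ \subset fv @: setT)) _.
  apply/subsetP => v /imsetP [_ /imsetP [a _ ->] ->].
  by apply/imsetP; exists (enum_val (g a)).1.
by rewrite (leq_trans (leq_imset_card _ _)) // cardsT card_ord.
Qed.

End Bandlimited.

Theorem theorem6 (R : realType) (N T : nat) (W : 'M[R]_N) (UG : 'M[R[i]]_N)
  (F : 'I_N -> {set 'I_T}) :
  undirected_graph W ->
  laplacian_eigenbasis W UG ->
  (joint_bw F < N * T)%N ->
  exists S : {set 'I_N * 'I_T},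
    #|S| = joint_bw F /\
    sampling_ratio R S = (joint_bw F)%:R / (N * T)%:R /\
    (#|vertex_proj S| <= graph_bw F)%N /\
    stable_sampling UG F S.
Proof.
move=> _ [UG_unitary _] _.
have [P [P_inj P_unit P_proj]] := exists_critical_samples F UG_unitary.
have [K [K_ge1 sqnorm_le]] := sqnorm_le_samples P_unit.
have card_S : #|P @: setT| = joint_bw F.
  by rewrite card_imset // cardsT card_ord card_band_support.
exists (P @: setT); split=> //; split; first by rewrite /sampling_ratio card_S.
split=> //; apply: (stable_sampling_lower_bound K_ge1) => X X_BL.
rewrite sample_energy_imset //.
move: (sqnorm_le (fun a => JFT UG X (band_index a).1 (band_index a).2)).
by rewrite -(in_BL_lincomb UG_unitary X_BL).
Qed.
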